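(* Let $R=[0,1]^2$, $s\in\mathbb{N}$, $u=2^{-s}$, and let $(B_1,B_2)$ be a good box pair. Let $(p,q),(p',q')\in B_1\times B_2$ with $p<q$ and $p'<q'$, and let $\ell,\ell'$ be the lines through $p,q$ and through $p',q'$ respectively. With $\lambda_p,\lambda_q$ the parameters of $p,q$ along $\ell$ and $\lambda_{p'},\lambda_{q'}$ those of $p',q'$ along $\ell'$, we have $|\lambda_p-\lambda_{p'}|\le\sqrt2u+4\sqrt u$ and $|\lambda_q-\lambda_{q'}|\le\sqrt2u+4\sqrt u$. As a consequence, $L=O(\sqrt u)$.
   Context: For $p,q\in\mathbb{R}^2$ write $p\le q$ (resp. $p<q$) if both coordinates satisfy $\le$ (resp. $<$). $R$ is split into $2^s\times2^s$ congruent closed squares (''boxes'') of side length $u$. A box pair is an ordered pair $(B_1,B_2)$ of boxes with centers $c_1,c_2$. Let $\mathcal{L}$ be the set of non-vertical lines in $\mathbb{R}^2$ with positive slope; each $\ell\in\mathcal{L}$ meets the line $y=-x$ in a unique point $b$ and is parametrized as $b+\lambda a$ with $a=(a_1,a_2)$ its unit direction vector with positive coordinates; $\hat{\ell}:=\min\{a_1,a_2\}$; for $p\in\ell$, $\lambda_p$ is the parameter with $p=b+\lambda_pa$. A line $\ell\in\mathcal{L}$ traverses $(B_1,B_2)$ if it meets both boxes; $\ell_c$ is the line through $c_1,c_2$. A box pair is null if $c_1\not\le c_2$; close if $c_1\le c_2$ and $\|c_1-c_2\|_2<\sqrt u$; non-diagonal if $c_1\le c_2$, $\|c_1-c_2\|_2\ge\sqrt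 u$, and every traversing $\ell\in\mathcal{L}$ satisfies $\hat{\ell}<u^{1/5}$; good if it is neither null, close, nor non-diagonal. $L_1$ is the supremum of $|\lambda_p-\lambda_{c_1}|$ over traversing lines $\ell$ and points $p\in\ell\cap B_1$ ($\lambda_p$ along $\ell$, $\lambda_{c_1}$ along $\ell_c$), $L_2$ likewise for $B_2$ and $c_2$, and $L:=\max\{L_1,L_2\}$. $O(\sqrt u)$ means bounded by an absolute constant times $\sqrt u$, uniformly over $s$ and good box pairs. *)

From Stdlib Require Import Reals Lra.
Open Scope R_scope.

Definition pt := (R * R)%type.

Definition ple (p q : pt) : Prop := fst p <= fst q /\ snd p <= snd q.
Definition plt (p q : pt) : Prop := fst p < fst q /\ snd p < snd q.

Definition dist2 (p q : pt) : R :=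
  sqrt ((fst p - fst q) ^ 2 + (snd p - snd q) ^ 2).

Definition side (s : nat) : R := (/ 2) ^ s.

(* A line in the class L is represented by the pair (b, a): b is its
   intersection with y = -x and a its unit direction vector with positive
   coordinates. Its points are b + lambda a. *)
Definition line_L (b a : pt) : Prop :=
  fst b + snd b = 0 /\ 0 < fst a /\ 0 < snd a /\ fst a ^ 2 + snd a ^ 2 = 1.

Definition on_line (b a : pt) (lam : R) (p : pt) : Prop :=
  p = (fst b + lam * fst a, snd b + lam * snd a).

Definition lhat (a : pt) : R := Rmin (fst a) (snd a).

(* Boxes: R = [0,1]^2 split into 2^s x 2^s closed squares; box (i,j) is
   [i u, (i+1) u] x [j u, (j+1) u] with i, j < 2^s. *)
Definition is_box (s i j : nat) : Prop := (i < 2 ^ s)%nat /\ (j < 2 ^ s)%nat.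

Definition in_box (s i j : nat) (p : pt) : Prop :=
  INR i * side s <= fst p <= (INR i + 1) * side s /\
  INR j * side s <= snd p <= (INR j + 1) * side s.

Definition center (s i j : nat) : pt :=
  ((INR i + / 2) * side s, (INR j + / 2) * side s).

Definition meets_box (s i j : nat) (b a : pt) : Prop :=
  exists p lam, in_box s i j p /\ on_line b a lam p.

Definition traverses (s i1 j1 i2 j2 : nat) (b a : pt) : Prop :=
  line_L b a /\ meets_box s i1 j1 b a /\ meets_box s i2 j2 b a.

Definition null_pair (s i1 j1 i2 j2 : nat) : Prop :=
  ~ ple (center s i1 j1) (center s i2 j2).

Definition close_pair (s i1 j1 i2 j2 : nat) : Prop :=
  ple (center s i1 j1) (center s i2 j2) /\
  dist2 (center s i1 j1) (center s i2 j2) < sqrt (side s).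

Definition nondiagonal_pair (s i1 j1 i2 j2 : nat) : Prop :=
  ple (center s i1 j1) (center s i2 j2) /\
  dist2 (center s i1 j1) (center s i2 j2) >= sqrt (side s) /\
  (forall b a, traverses s i1 j1 i2 j2 b a -> lhat a < Rpower (side s) (/ 5)).

Definition good_pair (s i1 j1 i2 j2 : nat) : Prop :=
  is_box s i1 j1 /\ is_box s i2 j2 /\
  ~ null_pair s i1 j1 i2 j2 /\ ~ close_pair s i1 j1 i2 j2 /\
  ~ nondiagonal_pair s i1 j1 i2 j2.

From Stdlib Require Import Reals Lra Lia Classical.
Open Scope R_scope.

(* On a line with unit direction [a] through a point of [y = -x], the parameter of [p] is
   [(p1 + p2) / (a1 + a2)], and [1 <= a1 + a2 <= sqrt 2].  For [p], [p'] in one box the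
   numerators differ by at most [2 u], so [|lam_p - lam_p'| <= 2 u + 2 |1/sig - 1/sig'|] where
   [sig], [sig'] are the direction sums of the two lines; everything reduces to bounding
   [|1/sig - 1/sig'|].  A segment from [B1] to [B2] is a chord whose displacement is within [u]
   of the centre displacement [D], a nonnegative vector of length at least [sqrt u].  Hence
   chords have length at least [sqrt u - sqrt 2 u], the cross product of two chord directions
   is [O(u / length)], and [sig' - sig] is at most [1 - eps] times that cross product when all
   direction coordinates are at least [eps].  Since the pair is not non-diagonal, some chord
   has both direction coordinates at least [u^(1/5)]; every other chord stays close to it,
   which gives [eps = 2 sqrt u] for small [u].  The sharp constant [sqrt 2 u] leaves no slack
   for [s <= 7], where the same estimates are run with explicit numerical constants.  The bound
   [L = O(sqrt u)] is the same argument against the line through the centres, whose direction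
   is exactly that of [D]. *)

Lemma Rabs_le_between (a b : R) : Rabs a <= b -> - b <= a <= b.
Proof. unfold Rabs; destruct (Rcase_abs a); lra. Qed.

Lemma pow2_le_reg (a b : R) : 0 <= b -> a ^ 2 <= b ^ 2 -> a <= b.
Proof. intros hb h; destruct (Rle_or_lt a b); [easy | nra]. Qed.

Lemma sqrt2_sq : sqrt 2 ^ 2 = 2.
Proof. apply pow2_sqrt; lra. Qed.

Lemma sqrt2_bounds : 1.4142 <= sqrt 2 <= 1.4143.
Proof.
  pose proof sqrt2_sq; pose proof (sqrt_pos 2).
  split; [apply Rnot_lt_le; intro; nra | apply pow2_le_reg; lra].
Qed.

Lemma Rpower_inv5_pow (u : R) : 0 < u -> Rpower u (/ 5) ^ 5 = u.
Proof.
  intros hu.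
  rewrite <- Rpower_pow, Rpower_mult by apply exp_pos.
  replace (/ 5 * INR 5) with 1 by (simpl; field).
  apply Rpower_1, hu.
Qed.

Lemma Rpower_inv5_ge (u c : R) : 0 < u -> c ^ 5 < u -> c <= Rpower u (/ 5).
Proof.
  intros hu hcu; apply Rnot_lt_le; intro.
  assert (Rpower u (/ 5) ^ 5 <= c ^ 5) by (apply pow_incr; split; [apply Rlt_le, exp_pos | lra]).
  rewrite Rpower_inv5_pow in * by exact hu; lra.
Qed.

Lemma Rpower_inv5_le (u c : R) : 0 < u -> 0 <= c -> u < c ^ 5 -> Rpower u (/ 5) <= c.
Proof.
  intros hu hc hcu; apply Rnot_lt_le; intro.
  assert (c ^ 5 <= Rpower u (/ 5) ^ 5) by (apply pow_incr; lra).
  rewrite Rpower_inv5_pow in * by exact hu; lra.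
Qed.

Lemma sqnorm_triangle (X1 X2 Y1 Y2 A B : R) : 0 <= A -> 0 <= B ->
  X1 ^ 2 + X2 ^ 2 <= A ^ 2 -> Y1 ^ 2 + Y2 ^ 2 <= B ^ 2 ->
  (X1 + Y1) ^ 2 + (X2 + Y2) ^ 2 <= (A + B) ^ 2.
Proof.
  intros hA hB hX hY.
  assert (lagrange : (X1 * Y1 + X2 * Y2) ^ 2 + (X1 * Y2 - X2 * Y1) ^ 2
                     = (X1 ^ 2 + X2 ^ 2) * (Y1 ^ 2 + Y2 ^ 2)) by ring.
  assert (cauchy_schwarz : X1 * Y1 + X2 * Y2 <= A * B).
  { apply pow2_le_reg; [nra |].
    assert ((X1 ^ 2 + X2 ^ 2) * (Y1 ^ 2 + Y2 ^ 2) <= A ^ 2 * B ^ 2)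
      by (apply Rmult_le_compat; nra).
    pose proof (pow2_ge_0 (X1 * Y2 - X2 * Y1)).
    replace ((A * B) ^ 2) with (A ^ 2 * B ^ 2) by ring; lra. }
  nra.
Qed.

Section UnitDirection.
Variables a1 a2 : R.
Hypotheses (a1_pos : 0 < a1) (a2_pos : 0 < a2) (a_unit : a1 ^ 2 + a2 ^ 2 = 1).

Lemma dir_sum_sq : (a1 + a2) ^ 2 = 1 + 2 * (a1 * a2).
Proof. rewrite <- a_unit; ring. Qed.

Lemma dir_sum_ge1 : 1 <= a1 + a2.
Proof. apply pow2_le_reg; [lra |]; rewrite dir_sum_sq; nra. Qed.

Lemma dir_sum_le_sqrt2 : a1 + a2 <= sqrt 2.
Proof.
  apply pow2_le_reg; [apply sqrt_pos |]; rewrite sqrt2_sq, dir_sum_sq.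
  pose proof (pow2_ge_0 (a1 - a2)); nra.
Qed.

Lemma dir_coords_le1 : a1 <= 1 /\ a2 <= 1.
Proof. split; apply pow2_le_reg; nra. Qed.

Lemma dir_sum_ge (e m : R) : 0 <= e -> e <= a1 -> e <= a2 -> 1 <= m ->
  (m ^ 2 - 1) ^ 2 <= 4 * e ^ 2 * (1 - e ^ 2) -> m <= a1 + a2.
Proof.
  intros e_ge0 e_a1 e_a2 m_ge1 hm.
  assert (e ^ 2 <= a1 ^ 2) by (apply pow_incr; lra).
  assert (e ^ 2 <= a2 ^ 2) by (apply pow_incr; lra).
  assert (e ^ 2 * (1 - e ^ 2) <= (a1 * a2) ^ 2) by nra.
  assert ((m ^ 2 - 1) / 2 <= a1 * a2) by (apply pow2_le_reg; nra).
  apply pow2_le_reg; [lra |]; rewrite dir_sum_sq; lra.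
Qed.

End UnitDirection.

Section TwoDirections.
Variables a1 a2 b1 b2 : R.
Hypotheses (a1_pos : 0 < a1) (a2_pos : 0 < a2) (a_unit : a1 ^ 2 + a2 ^ 2 = 1).
Hypotheses (b1_pos : 0 < b1) (b2_pos : 0 < b2) (b_unit : b1 ^ 2 + b2 ^ 2 = 1).

Lemma dir_sum_diff_le (rho : R) : Rabs (a1 - a2) <= rho -> Rabs (b1 - b2) <= rho ->
  Rabs ((b1 + b2) - (a1 + a2)) <= rho * Rabs (a1 * b2 - a2 * b1).
Proof.
  intros ha hb.
  (* For unit vectors [sig_b^2 - sig_a^2 = 2 (b1 b2 - a1 a2)], which factors through the
     cross product. *)
  assert (key : ((b1 + b2) - (a1 + a2)) * ((b1 + b2) + (a1 + a2))
                = (a1 * b2 - a2 * b1) * ((a1 - a2) * (b1 + b2) + (b1 - b2) * (a1 + a2))).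
  { apply Rminus_diag_uniq.
    transitivity ((b1 ^ 2 + b2 ^ 2) - (a1 ^ 2 + a2 ^ 2)
                  + 2 * b1 * b2 * (1 - (a1 ^ 2 + a2 ^ 2)) - 2 * a1 * a2 * (1 - (b1 ^ 2 + b2 ^ 2)));
      [ring | rewrite a_unit, b_unit; ring]. }
  assert (factor : Rabs ((a1 - a2) * (b1 + b2) + (b1 - b2) * (a1 + a2))
                   <= rho * ((b1 + b2) + (a1 + a2))).
  { eapply Rle_trans; [apply Rabs_triang |].
    rewrite !Rabs_mult, (Rabs_pos_eq (b1 + b2)), (Rabs_pos_eq (a1 + a2)) by lra.
    nra. }
  apply (Rmult_le_reg_r ((b1 + b2) + (a1 + a2))); [lra |].
  rewrite <- (Rabs_pos_eq ((b1 + b2) + (a1 + a2))) at 1 by lra.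
  rewrite <- Rabs_mult, key, Rabs_mult.
  pose proof (Rabs_pos (a1 * b2 - a2 * b1)); nra.
Qed.

Lemma inv_dir_sum_diff_le_of_sum_ge (m : R) : 0 < m -> m <= a1 + a2 -> m <= b1 + b2 ->
  Rabs (/ (a1 + a2) - / (b1 + b2)) <= / m - sqrt 2 / 2.
Proof.
  intros m_pos ma mb.
  assert (a1 + a2 <= sqrt 2) by (apply dir_sum_le_sqrt2; auto).
  assert (b1 + b2 <= sqrt 2) by (apply dir_sum_le_sqrt2; auto).
  pose proof sqrt2_sq; pose proof sqrt2_bounds.
  assert (inv_sqrt2 : / sqrt 2 = sqrt 2 / 2) by (field_simplify_eq; [nra | lra]).
  assert (/ sqrt 2 <= / (a1 + a2) <= / m) by (split; apply Rinv_le_contravar; lra).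
  assert (/ sqrt 2 <= / (b1 + b2) <= / m) by (split; apply Rinv_le_contravar; lra).
  apply Rabs_le; lra.
Qed.

End TwoDirections.

(* [L * a] is the displacement along a chord of direction [a] and length [L] from a point of
   [B1] to a point of [B2]; it lies within [u] of the displacement [D] between the centres. *)
Section Chord.
Variables (u D1 D2 L a1 a2 : R).
Hypotheses (La1 : Rabs (L * a1 - D1) <= u) (La2 : Rabs (L * a2 - D2) <= u).

Lemma chord_len_ge (x : R) : 0 <= L -> a1 ^ 2 + a2 ^ 2 = 1 -> 0 <= x ->
  x ^ 2 <= D1 ^ 2 + D2 ^ 2 -> x - sqrt 2 * u <= L.
Proof.
  intros L_ge0 a_unit x_ge0 hx.
  assert (u_ge0 : 0 <= u) by (eapply Rle_trans; [apply Rabs_pos | exact La1]).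
  apply Rabs_le_between in La1, La2.
  pose proof sqrt2_sq; pose proof (sqrt_pos 2).
  assert (triangle := sqnorm_triangle (L * a1) (L * a2) (D1 - L * a1) (D2 - L * a2)
                        L (sqrt 2 * u)).
  replace (L * a1 + (D1 - L * a1)) with D1 in triangle by ring.
  replace (L * a2 + (D2 - L * a2)) with D2 in triangle by ring.
  enough (x <= L + sqrt 2 * u) by lra.
  apply pow2_le_reg; [nra |].
  apply (Rle_trans _ _ _ hx), triangle; [easy | nra | nra |].
  replace ((sqrt 2 * u) ^ 2) with (2 * u ^ 2) by nra; nra.
Qed.

Lemma chord_len_pos : 0 < a1 -> 0 < a2 -> 0 <= D1 -> 0 <= D2 ->
  2 * u ^ 2 < D1 ^ 2 + D2 ^ 2 -> 0 < L.
Proof.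
  intros a1_pos a2_pos D1_ge0 D2_ge0 hD.
  apply Rabs_le_between in La1, La2.
  apply Rnot_le_lt; intro L_le0.
  assert (D1 <= u) by nra.
  assert (D2 <= u) by nra.
  nra.
Qed.

End Chord.

Section TwoChords.
Variables (u D1 D2 L a1 a2 L' b1 b2 : R).
Hypotheses (a1_pos : 0 < a1) (a2_pos : 0 < a2) (a_unit : a1 ^ 2 + a2 ^ 2 = 1).
Hypotheses (b1_pos : 0 < b1) (b2_pos : 0 < b2) (b_unit : b1 ^ 2 + b2 ^ 2 = 1).
Hypotheses (La1 : Rabs (L * a1 - D1) <= u) (La2 : Rabs (L * a2 - D2) <= u).
Hypotheses (Lb1 : Rabs (L' * b1 - D1) <= u) (Lb2 : Rabs (L' * b2 - D2) <= u).
Hypothesis L'_ge0 : 0 <= L'.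

Lemma chords_cross_le : L' * Rabs (a1 * b2 - a2 * b1) <= 2 * u * (a1 + a2).
Proof.
  apply Rabs_le_between in La1, La2, Lb1, Lb2.
  rewrite <- (Rabs_pos_eq L') at 1 by exact L'_ge0.
  rewrite <- Rabs_mult.
  replace (L' * (a1 * b2 - a2 * b1))
    with (a1 * (L' * b2 - L * a2) - a2 * (L' * b1 - L * a1)) by ring.
  apply Rabs_le; split; nra.
Qed.

Lemma chord_len_le : L <= L' + 2 * sqrt 2 * u.
Proof.
  assert (u_ge0 : 0 <= u) by (eapply Rle_trans; [apply Rabs_pos | exact La1]).
  apply Rabs_le_between in La1, La2, Lb1, Lb2.
  pose proof sqrt2_sq; pose proof (sqrt_pos 2).
  assert (triangle := sqnorm_triangle (L' * b1) (L' * b2) (L * a1 - L' * b1) (L * a2 - L' * b2)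
                        L' (2 * sqrt 2 * u)).
  replace (L' * b1 + (L * a1 - L' * b1)) with (L * a1) in triangle by ring.
  replace (L' * b2 + (L * a2 - L' * b2)) with (L * a2) in triangle by ring.
  apply pow2_le_reg; [nra |].
  replace (L ^ 2) with ((L * a1) ^ 2 + (L * a2) ^ 2)
    by (rewrite <- (Rmult_1_r (L ^ 2)), <- a_unit; ring).
  apply triangle; [easy | nra | nra |].
  replace ((2 * sqrt 2 * u) ^ 2) with (8 * u ^ 2) by nra; nra.
Qed.

Lemma chord_dirs_ge (w x eps : R) : 0 < L -> w <= b1 -> w <= b2 ->
  x - sqrt 2 * u <= L' -> 0 <= eps <= w ->
  2 * u + 2 * sqrt 2 * u * eps <= (x - sqrt 2 * u) * (w - eps) -> eps <= a1 /\ eps <= a2.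
Proof.
  intros L_pos w_b1 w_b2 hL' heps hcond.
  assert (L_le := chord_len_le).
  assert (u_ge0 : 0 <= u) by (eapply Rle_trans; [apply Rabs_pos | exact La1]).
  apply Rabs_le_between in La1, La2, Lb1, Lb2.
  assert (eps * L <= L' * w - 2 * u) by nra.
  split; apply (Rmult_le_reg_l L); nra.
Qed.

Lemma inv_dir_sum_diff_le (eps : R) : eps <= a1 -> eps <= a2 -> eps <= b1 -> eps <= b2 ->
  Rabs (/ (a1 + a2) - / (b1 + b2)) * ((b1 + b2) * L') <= (1 - eps) * (2 * u).
Proof.
  intros e_a1 e_a2 e_b1 e_b2.
  destruct (dir_coords_le1 a1 a2) as [a1_le1 a2_le1]; auto.
  destruct (dir_coords_le1 b1 b2) as [b1_le1 b2_le1]; auto.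
  assert (sum_diff := dir_sum_diff_le a1 a2 b1 b2 a1_pos a2_pos a_unit b1_pos b2_pos b_unit
                        (1 - eps)
                        ltac:(apply Rabs_le; lra) ltac:(apply Rabs_le; lra)).
  assert (cross := chords_cross_le).
  assert (1 <= a1 + a2) by (apply dir_sum_ge1; auto).
  assert (1 <= b1 + b2) by (apply dir_sum_ge1; auto).
  assert (scaled : Rabs (/ (a1 + a2) - / (b1 + b2)) * ((b1 + b2) * L') * (a1 + a2)
                   = Rabs ((b1 + b2) - (a1 + a2)) * L').
  { replace (/ (a1 + a2) - / (b1 + b2))
      with (((b1 + b2) - (a1 + a2)) * / ((a1 + a2) * (b1 + b2))) by (field; lra).
    rewrite Rabs_mult, Rabs_inv, (Rabs_pos_eq ((a1 + a2) * (b1 + b2))) by nra.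
    field; lra. }
  apply (Rmult_le_reg_r (a1 + a2)); [lra |].
  rewrite scaled.
  pose proof (Rabs_pos (a1 * b2 - a2 * b1)).
  nra.
Qed.

End TwoChords.

Lemma side_pos (s : nat) : 0 < side s.
Proof. apply pow_lt; lra. Qed.

Lemma side_le1 (s : nat) : side s <= 1.
Proof. rewrite <- (pow1 s); apply pow_incr; lra. Qed.

Lemma side_le_sqrt_side (s : nat) : side s <= sqrt (side s).
Proof.
  pose proof (side_pos s); pose proof (side_le1 s); pose proof (sqrt_pos (side s)).
  assert (sqrt (side s) <= 1) by (rewrite <- sqrt_1; apply sqrt_le_1; lra).
  rewrite <- (pow2_sqrt (side s)) at 1 by lra.
  nra.
Qed.

Lemma side_regimes (s : nat) :
  1 / 32 <= side s \/ side s = 1 / 64 \/ side s = 1 / 128 \/ side s <= 1 / 256.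
Proof.
  do 8 (destruct s as [| s]; [unfold side; simpl; lra |]).
  right; right; right.
  replace (S (S (S (S (S (S (S (S s)))))))) with (8 + s)%nat by lia.
  unfold side; rewrite pow_add.
  pose proof (side_le1 s); pose proof (side_pos s); unfold side in *.
  simpl; nra.
Qed.

Definition diagonal_chord (u D1 D2 : R) : Prop :=
  exists t r1 r2, 0 < r1 /\ 0 < r2 /\ r1 ^ 2 + r2 ^ 2 = 1 /\
    Rpower u (/ 5) <= r1 /\ Rpower u (/ 5) <= r2 /\
    Rabs (t * r1 - D1) <= u /\ Rabs (t * r2 - D2) <= u.

Section DirectionSums.
Variables (u D1 D2 L a1 a2 L' b1 b2 : R).
Hypotheses (u_pos : 0 < u) (D1_ge0 : 0 <= D1) (D2_ge0 : 0 <= D2) (D_long : u <= D1 ^ 2 + D2 ^ 2).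
Hypotheses (a1_pos : 0 < a1) (a2_pos : 0 < a2) (a_unit : a1 ^ 2 + a2 ^ 2 = 1).
Hypotheses (b1_pos : 0 < b1) (b2_pos : 0 < b2) (b_unit : b1 ^ 2 + b2 ^ 2 = 1).
Hypotheses (L_pos : 0 < L) (L'_pos : 0 < L').
Hypotheses (La1 : Rabs (L * a1 - D1) <= u) (La2 : Rabs (L * a2 - D2) <= u).
Hypotheses (Lb1 : Rabs (L' * b1 - D1) <= u) (Lb2 : Rabs (L' * b2 - D2) <= u).
Hypothesis diagonal : diagonal_chord u D1 D2.

Lemma chord_len_ge_sqrt_side (K c1 c2 : R) : 0 <= K -> c1 ^ 2 + c2 ^ 2 = 1 ->
  Rabs (K * c1 - D1) <= u -> Rabs (K * c2 - D2) <= u -> sqrt u - sqrt 2 * u <= K.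
Proof.
  intros. apply (chord_len_ge u D1 D2 K c1 c2); auto; [apply sqrt_pos |].
  rewrite pow2_sqrt; lra.
Qed.

Lemma chord_dirs_ge_diagonal (eps : R) : u <= 1 / 64 -> 0 <= eps <= Rpower u (/ 5) ->
  2 * u + 2 * sqrt 2 * u * eps <= (sqrt u - sqrt 2 * u) * (Rpower u (/ 5) - eps) ->
  eps <= a1 /\ eps <= a2 /\ eps <= b1 /\ eps <= b2.
Proof.
  intros u_small heps hcond.
  destruct diagonal as (t & r1 & r2 & r1_pos & r2_pos & r_unit & w_r1 & w_r2 & Tr1 & Tr2).
  assert (t_pos : 0 < t) by (apply (chord_len_pos u D1 D2 t r1 r2); auto; nra).
  assert (t_long : sqrt u - sqrt 2 * u <= t) by (apply (chord_len_ge_sqrt_side t r1 r2); auto; lra).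
  destruct (chord_dirs_ge u D1 D2 L a1 a2 t r1 r2 a_unit r_unit La1 La2 Tr1 Tr2
              ltac:(lra) _ _ eps L_pos w_r1 w_r2 t_long heps hcond).
  destruct (chord_dirs_ge u D1 D2 L' b1 b2 t r1 r2 b_unit r_unit Lb1 Lb2 Tr1 Tr2
              ltac:(lra) _ _ eps L'_pos w_r1 w_r2 t_long heps hcond).
  auto.
Qed.

Lemma dir_sums_close_large : 1 / 32 <= u -> u <= 1 ->
  2 * u + 2 * Rabs (/ (a1 + a2) - / (b1 + b2)) <= sqrt 2 * u + 4 * sqrt u.
Proof.
  intros u_large u_le1.
  assert (coarse := inv_dir_sum_diff_le_of_sum_ge a1 a2 b1 b2 a1_pos a2_pos a_unit
                      b1_pos b2_pos b_unit 1 ltac:(lra)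
                      ltac:(apply dir_sum_ge1; auto) ltac:(apply dir_sum_ge1; auto)).
  pose proof sqrt2_bounds; pose proof (pow2_sqrt u ltac:(lra)); pose proof (sqrt_pos u).
  assert (sqrt u <= 1) by (apply pow2_le_reg; lra).
  assert (0.176 <= sqrt u) by (apply Rnot_lt_le; intro; nra).
  assert ((sqrt u - 0.176) * (sqrt u - 1) <= 0) by nra.
  rewrite Rinv_1 in coarse. nra.
Qed.

Lemma dir_sums_close_64 : u = 1 / 64 ->
  2 * u + 2 * Rabs (/ (a1 + a2) - / (b1 + b2)) <= sqrt 2 * u + 4 * sqrt u.
Proof.
  intros hu.
  assert (x_eq : sqrt u = 1 / 8)
    by (rewrite hu, <- (sqrt_pow2 (1 / 8)) by lra; f_equal; field).
  assert (0.43 <= Rpower u (/ 5)) by (apply Rpower_inv5_ge; lra).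
  pose proof sqrt2_bounds.
  destruct (chord_dirs_ge_diagonal 0.08) as (e_a1 & e_a2 & e_b1 & e_b2);
    [lra | lra | rewrite x_eq; nra |].
  assert (1.076 <= a1 + a2)
    by (apply (dir_sum_ge a1 a2) with (e := 0.08); auto; lra).
  assert (1.076 <= b1 + b2)
    by (apply (dir_sum_ge b1 b2) with (e := 0.08); auto; lra).
  assert (coarse := inv_dir_sum_diff_le_of_sum_ge a1 a2 b1 b2 a1_pos a2_pos a_unit
                      b1_pos b2_pos b_unit 1.076 ltac:(lra) ltac:(lra) ltac:(lra)).
  rewrite x_eq, hu; lra.
Qed.

Lemma dir_sums_close_128 : u = 1 / 128 ->
  2 * u + 2 * Rabs (/ (a1 + a2) - / (b1 + b2)) <= sqrt 2 * u + 4 * sqrt u.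
Proof.
  intros hu.
  pose proof sqrt2_bounds; pose proof (pow2_sqrt u ltac:(lra)); pose proof (sqrt_pos u).
  assert (0.08838 <= sqrt u <= 0.08839)
    by (split; [apply Rnot_lt_le; intro; nra | apply pow2_le_reg; lra]).
  assert (0.378 <= Rpower u (/ 5)) by (apply Rpower_inv5_ge; lra).
  assert (0.011 <= sqrt 2 * u <= 0.01105) by (rewrite hu; lra).
  destruct (chord_dirs_ge_diagonal 0.13) as (e_a1 & e_a2 & e_b1 & e_b2); [lra | lra | nra |].
  assert (1.12 <= b1 + b2)
    by (apply (dir_sum_ge b1 b2) with (e := 0.13); auto; lra).
  assert (sqrt u - sqrt 2 * u <= L') by (apply (chord_len_ge_sqrt_side L' b1 b2); auto; lra).
  assert (fine := inv_dir_sum_diff_le u D1 D2 L a1 a2 L' b1 b2 a1_pos a2_pos a_unit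
                    b1_pos b2_pos b_unit La1 La2 Lb1 Lb2 ltac:(lra) 0.13 e_a1 e_a2 e_b1 e_b2).
  pose proof (Rabs_pos (/ (a1 + a2) - / (b1 + b2))).
  assert (Rabs (/ (a1 + a2) - / (b1 + b2)) * (1.12 * 0.0773)
          <= Rabs (/ (a1 + a2) - / (b1 + b2)) * ((b1 + b2) * L'))
    by (apply Rmult_le_compat_l; nra).
  lra.
Qed.

Lemma dir_sums_close_small : u <= 1 / 256 ->
  2 * u + 2 * Rabs (/ (a1 + a2) - / (b1 + b2)) <= sqrt 2 * u + 4 * sqrt u.
Proof.
  intros u_small.
  pose proof sqrt2_bounds; pose proof sqrt2_sq.
  assert (x_pos : 0 < sqrt u) by (apply sqrt_lt_R0, u_pos).
  assert (x_small : sqrt u <= 1 / 16) by (apply pow2_le_reg; [lra | rewrite pow2_sqrt; lra]).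
  assert (w_ge : 5 * sqrt u <= Rpower u (/ 5)).
  { assert (w_pow := Rpower_inv5_pow u u_pos).
    assert (Rpower u (/ 5) <= 0.33) by (apply Rpower_inv5_le; lra).
    set (w := Rpower u (/ 5)) in *.
    assert (0 < w) by apply exp_pos.
    assert (w ^ 3 <= 0.33 ^ 3) by (apply pow_incr; lra).
    apply pow2_le_reg; [lra |].
    replace ((5 * sqrt u) ^ 2) with (25 * sqrt u ^ 2) by ring.
    rewrite pow2_sqrt, <- w_pow by lra.
    replace (w ^ 5) with (w ^ 3 * w ^ 2) by ring.
    pose proof (pow2_ge_0 w); nra. }
  assert (x_sq : sqrt u ^ 2 = u) by (apply pow2_sqrt; lra).
  assert (r2x : sqrt 2 * sqrt u <= 0.09) by nra.
  assert (V_eq : sqrt u - sqrt 2 * u = sqrt u * (1 - sqrt 2 * sqrt u))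
    by (rewrite <- x_sq at 2; ring).
  assert (V_pos : 0 < sqrt u - sqrt 2 * u) by (rewrite V_eq; apply Rmult_lt_0_compat; lra).
  destruct (chord_dirs_ge_diagonal (2 * sqrt u)) as (e_a1 & e_a2 & e_b1 & e_b2); [lra | lra | |].
  { assert ((sqrt u - sqrt 2 * u) * (3 * sqrt u)
            <= (sqrt u - sqrt 2 * u) * (Rpower u (/ 5) - 2 * sqrt u))
      by (apply Rmult_le_compat_l; lra).
    assert (0 <= u * (1 - 7 * sqrt 2 * sqrt u)) by (apply Rmult_le_pos; lra).
    nra. }
  assert (1 <= b1 + b2) by (apply dir_sum_ge1; auto).
  assert (sqrt u - sqrt 2 * u <= L') by (apply (chord_len_ge_sqrt_side L' b1 b2); auto; lra).
  assert (fine := inv_dir_sum_diff_le u D1 D2 L a1 a2 L' b1 b2 a1_pos a2_pos a_unit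
                    b1_pos b2_pos b_unit La1 La2 Lb1 Lb2 ltac:(lra) (2 * sqrt u)
                    e_a1 e_a2 e_b1 e_b2).
  set (G := Rabs (/ (a1 + a2) - / (b1 + b2))) in *.
  assert (G_ge0 : 0 <= G) by apply Rabs_pos.
  assert (G * (sqrt u - sqrt 2 * u) <= (1 - 2 * sqrt u) * (2 * u))
    by (eapply Rle_trans; [apply Rmult_le_compat_l | exact fine]; nra).
  apply (Rmult_le_reg_r (sqrt u - sqrt 2 * u)); [exact V_pos |].
  assert (0 <= u * sqrt u * (3 + sqrt 2 * sqrt u)) by (apply Rmult_le_pos; nra).
  nra.
Qed.

Lemma dir_sums_close (s : nat) : u = side s ->
  2 * u + 2 * Rabs (/ (a1 + a2) - / (b1 + b2)) <= sqrt 2 * u + 4 * sqrt u.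
Proof.
  intros hu.
  destruct (side_regimes s) as [h | [h | [h | h]]]; rewrite <- hu in h.
  - apply dir_sums_close_large; [exact h | rewrite hu; apply side_le1].
  - exact (dir_sums_close_64 h).
  - exact (dir_sums_close_128 h).
  - exact (dir_sums_close_small h).
Qed.

End DirectionSums.

Lemma box_index_bound (s k : nat) : (k < 2 ^ s)%nat -> (INR k + 1) * side s <= 1.
Proof.
  intros hk.
  assert (INR k + 1 <= 2 ^ s).
  { rewrite <- S_INR, <- (pow_INR 2); simpl INR at 2; replace (1 + 1) with 2 by lra.
    apply le_INR; lia. }
  replace 1 with (2 ^ s * side s) at 2
    by (unfold side; rewrite <- Rpow_mult_distr, Rinv_r, pow1; lra).
  apply Rmult_le_compat_r; [apply Rlt_le, side_pos | easy].
Qed.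

Lemma box_sum_bounds (s i j : nat) (p : pt) : is_box s i j -> in_box s i j p ->
  0 <= fst p + snd p <= 2.
Proof.
  intros [hi hj] [hx hy].
  pose proof (box_index_bound s i hi); pose proof (box_index_bound s j hj).
  pose proof (pos_INR i); pose proof (pos_INR j); pose proof (side_pos s).
  split; nra.
Qed.

Lemma center_in_box (s i j : nat) : in_box s i j (center s i j).
Proof. pose proof (side_pos s); unfold in_box, center; simpl; lra. Qed.

Lemma in_box_near_center (s i j : nat) (p : pt) : in_box s i j p ->
  Rabs (fst p - fst (center s i j)) <= side s / 2 /\
  Rabs (snd p - snd (center s i j)) <= side s / 2.
Proof. intros [hx hy]; unfold center; simpl; split; apply Rabs_le; lra. Qed.

Lemma in_box_sum_diff (s i j : nat) (p p' : pt) : in_box s i j p -> in_box s i j p' ->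
  Rabs ((fst p + snd p) - (fst p' + snd p')) <= 2 * side s.
Proof. intros [hx hy] [hx' hy']; apply Rabs_le; lra. Qed.

Lemma in_box_sum_near_center (s i j : nat) (p : pt) : in_box s i j p ->
  Rabs ((fst p + snd p) - (fst (center s i j) + snd (center s i j))) <= side s.
Proof. intros [hx hy]; unfold center; simpl; apply Rabs_le; lra. Qed.

Lemma on_line_param (b a : pt) (lam : R) (p : pt) : line_L b a -> on_line b a lam p ->
  lam = (fst p + snd p) / (fst a + snd a).
Proof. intros (hb & a1_pos & a2_pos & _) ->; simpl; field_simplify_eq; lra. Qed.

Lemma on_line_sub (b a : pt) (l1 l2 : R) (p1 p2 : pt) :
  on_line b a l1 p1 -> on_line b a l2 p2 ->
  fst p2 - fst p1 = (l2 - l1) * fst a /\ snd p2 - snd p1 = (l2 - l1) * snd a.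
Proof. intros -> ->; simpl; split; ring. Qed.

Lemma chord_pos_of_lt (b a : pt) (lp lq : R) (p q : pt) : line_L b a ->
  on_line b a lp p -> on_line b a lq q -> plt p q -> 0 < lq - lp.
Proof.
  intros (_ & a1_pos & _) ep eq [lt1 _].
  destruct (on_line_sub b a lp lq p q ep eq) as [e1 _].
  apply Rnot_le_lt; intro; nra.
Qed.

Lemma chord_fits_centers (s i1 j1 i2 j2 : nat) (b a : pt) (lp lq : R) (p q : pt) :
  in_box s i1 j1 p -> in_box s i2 j2 q -> on_line b a lp p -> on_line b a lq q ->
  Rabs ((lq - lp) * fst a - (fst (center s i2 j2) - fst (center s i1 j1))) <= side s /\
  Rabs ((lq - lp) * snd a - (snd (center s i2 j2) - snd (center s i1 j1))) <= side s.
Proof.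
  intros hp hq ep eq.
  destruct (on_line_sub b a lp lq p q ep eq) as [<- <-].
  destruct (in_box_near_center s i1 j1 p hp) as [c1 c2].
  destruct (in_box_near_center s i2 j2 q hq) as [c3 c4].
  apply Rabs_le_between in c1, c2, c3, c4.
  split; apply Rabs_le; lra.
Qed.

Lemma param_diff_le (b a b' a' : pt) (lam lam' : R) (p p' : pt) (E : R) :
  line_L b a -> line_L b' a' -> on_line b a lam p -> on_line b' a' lam' p' ->
  0 <= fst p' + snd p' <= 2 -> Rabs ((fst p + snd p) - (fst p' + snd p')) <= E ->
  Rabs (lam - lam') <= E + 2 * Rabs (/ (fst a + snd a) - / (fst a' + snd a')).
Proof.
  intros hl hl' ep ep' hS' hE.
  rewrite (on_line_param b a lam p hl ep), (on_line_param b' a' lam' p' hl' ep').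
  destruct hl as (_ & a1_pos & a2_pos & a_unit), hl' as (_ & a1'_pos & a2'_pos & a'_unit).
  assert (1 <= fst a + snd a) by (apply dir_sum_ge1; auto).
  assert (1 <= fst a' + snd a') by (apply dir_sum_ge1; auto).
  assert (0 < / (fst a + snd a) <= 1)
    by (split; [apply Rinv_0_lt_compat; lra | rewrite <- Rinv_1; apply Rinv_le_contravar; lra]).
  replace ((fst p + snd p) / (fst a + snd a) - (fst p' + snd p') / (fst a' + snd a'))
    with (((fst p + snd p) - (fst p' + snd p')) * / (fst a + snd a)
          + (fst p' + snd p') * (/ (fst a + snd a) - / (fst a' + snd a'))) by (field; lra).
  eapply Rle_trans; [apply Rabs_triang |].
  rewrite !Rabs_mult, (Rabs_pos_eq (/ _)), (Rabs_pos_eq (fst p' + snd p')) by lra.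
  pose proof (Rabs_pos ((fst p + snd p) - (fst p' + snd p'))).
  pose proof (Rabs_pos (/ (fst a + snd a) - / (fst a' + snd a'))).
  apply Rplus_le_compat; nra.
Qed.

Lemma good_pair_centers (s i1 j1 i2 j2 : nat) : good_pair s i1 j1 i2 j2 ->
  let D1 := fst (center s i2 j2) - fst (center s i1 j1) in
  let D2 := snd (center s i2 j2) - snd (center s i1 j1) in
  0 <= D1 /\ 0 <= D2 /\ side s <= D1 ^ 2 + D2 ^ 2.
Proof.
  intros (_ & _ & not_null & not_close & _) D1 D2.
  apply NNPP in not_null as [h1 h2].
  repeat split; [unfold D1; lra | unfold D2; lra |].
  apply Rnot_lt_le; intro short; apply not_close; split; [now split |].
  unfold dist2.
  replace ((fst (center s i1 j1) - fst (center s i2 j2)) ^ 2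
           + (snd (center s i1 j1) - snd (center s i2 j2)) ^ 2)
    with (D1 ^ 2 + D2 ^ 2) by (unfold D1, D2; ring).
  apply sqrt_lt_1; nra.
Qed.

Lemma good_pair_diagonal_chord (s i1 j1 i2 j2 : nat) : good_pair s i1 j1 i2 j2 ->
  diagonal_chord (side s) (fst (center s i2 j2) - fst (center s i1 j1))
                          (snd (center s i2 j2) - snd (center s i1 j1)).
Proof.
  intros hg.
  destruct (good_pair_centers s i1 j1 i2 j2 hg) as (D1_ge0 & D2_ge0 & D_long).
  destruct hg as (_ & _ & _ & not_close & not_nondiagonal).
  assert (exists b a, traverses s i1 j1 i2 j2 b a /\ Rpower (side s) (/ 5) <= lhat a)
    as (b & a & (hl & (p & lp & hp & ep) & (q & lq & hq & eq)) & hdiag).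
  { apply NNPP; intro none; apply not_nondiagonal.
    split; [split; lra |]. split.
    - apply Rnot_lt_ge; intro; apply not_close; split; [split; lra | easy].
    - intros b a ht; apply Rnot_le_lt; intro; apply none; now exists b, a. }
  destruct (chord_fits_centers s i1 j1 i2 j2 b a lp lq p q hp hq ep eq) as [f1 f2].
  destruct hl as (_ & a1_pos & a2_pos & a_unit).
  unfold lhat in hdiag; pose proof (Rmin_l (fst a) (snd a)); pose proof (Rmin_r (fst a) (snd a)).
  exists (lq - lp), (fst a), (snd a); repeat split; auto; lra.
Qed.

Lemma good_pair_dir_sums_close (s i1 j1 i2 j2 : nat) (p q p' q' b a b' a' : pt)
  (lp lq lp' lq' : R) :
  good_pair s i1 j1 i2 j2 ->
  in_box s i1 j1 p -> in_box s i2 j2 q -> in_box s i1 j1 p' -> in_box s i2 j2 q' ->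
  plt p q -> plt p' q' ->
  line_L b a -> on_line b a lp p -> on_line b a lq q ->
  line_L b' a' -> on_line b' a' lp' p' -> on_line b' a' lq' q' ->
  2 * side s + 2 * Rabs (/ (fst a + snd a) - / (fst a' + snd a'))
  <= sqrt 2 * side s + 4 * sqrt (side s).
Proof.
  intros hg hp hq hp' hq' pq pq' hl ep eq hl' ep' eq'.
  destruct (good_pair_centers s i1 j1 i2 j2 hg) as (D1_ge0 & D2_ge0 & D_long).
  destruct (chord_fits_centers s i1 j1 i2 j2 b a lp lq p q hp hq ep eq) as [f1 f2].
  destruct (chord_fits_centers s i1 j1 i2 j2 b' a' lp' lq' p' q' hp' hq' ep' eq') as [f1' f2'].
  pose proof (chord_pos_of_lt b a lp lq p q hl ep eq pq).
  pose proof (chord_pos_of_lt b' a' lp' lq' p' q' hl' ep' eq' pq').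
  pose proof (good_pair_diagonal_chord s i1 j1 i2 j2 hg).
  destruct hl as (_ & hl), hl' as (_ & hl').
  apply (dir_sums_close (side s) (fst (center s i2 j2) - fst (center s i1 j1))
           (snd (center s i2 j2) - snd (center s i1 j1)) (lq - lp) (fst a) (snd a)
           (lq' - lp') (fst a') (snd a')) with s; try apply side_pos; tauto.
Qed.

Lemma center_dir_sum_close (s i1 j1 i2 j2 : nat) (b a bc ac : pt) (mu1 mu2 : R) :
  good_pair s i1 j1 i2 j2 -> traverses s i1 j1 i2 j2 b a -> line_L bc ac ->
  on_line bc ac mu1 (center s i1 j1) -> on_line bc ac mu2 (center s i2 j2) ->
  Rabs (/ (fst a + snd a) - / (fst ac + snd ac)) <= 2 * sqrt (side s).
Proof.
  intros hg (hl & (p & lp & hp & ep) & (q & lq & hq & eq)) hlc e1 e2.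
  destruct (good_pair_centers s i1 j1 i2 j2 hg) as (D1_ge0 & D2_ge0 & D_long).
  destruct (chord_fits_centers s i1 j1 i2 j2 b a lp lq p q hp hq ep eq) as [f1 f2].
  destruct (on_line_sub bc ac mu1 mu2 _ _ e1 e2) as [D1_eq D2_eq].
  destruct hl as (_ & a1_pos & a2_pos & a_unit), hlc as (_ & c1_pos & c2_pos & c_unit).
  set (u := side s) in *; set (m := mu2 - mu1) in *.
  assert (u_pos : 0 < u) by apply side_pos.
  pose proof (pow2_sqrt u ltac:(lra)); pose proof (sqrt_lt_R0 u u_pos).
  assert (m_long : sqrt u <= m).
  { apply pow2_le_reg; [nra |].
    replace (m ^ 2) with ((m * fst ac) ^ 2 + (m * snd ac) ^ 2)
      by (rewrite <- (Rmult_1_r (m ^ 2)), <- c_unit; ring).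
    rewrite <- D1_eq, <- D2_eq; lra. }
  assert (exact_fit : forall D c, D = m * c -> Rabs (m * c - D) <= u)
    by (intros D c ->; rewrite Rminus_diag, Rabs_R0; lra).
  assert (fine := inv_dir_sum_diff_le u _ _ (lq - lp) _ _ m _ _ a1_pos a2_pos a_unit
                    c1_pos c2_pos c_unit f1 f2 (exact_fit _ _ D1_eq) (exact_fit _ _ D2_eq)
                    ltac:(lra) 0 ltac:(lra) ltac:(lra) ltac:(lra) ltac:(lra)).
  assert (1 <= fst ac + snd ac) by (apply dir_sum_ge1; auto).
  set (G := Rabs (/ (fst a + snd a) - / (fst ac + snd ac))) in *.
  assert (G * sqrt u <= G * ((fst ac + snd ac) * m))
    by (apply Rmult_le_compat_l; [apply Rabs_pos | nra]).
  apply (Rmult_le_reg_r (sqrt u)); [easy |].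
  lra.
Qed.

Theorem lemma9 :
  (* main estimate *)
  (forall (s i1 j1 i2 j2 : nat) (p q p' q' b a b' a' : pt)
          (lp lq lp' lq' : R),
     good_pair s i1 j1 i2 j2 ->
     in_box s i1 j1 p -> in_box s i2 j2 q ->
     in_box s i1 j1 p' -> in_box s i2 j2 q' ->
     plt p q -> plt p' q' ->
     line_L b a -> on_line b a lp p -> on_line b a lq q ->
     line_L b' a' -> on_line b' a' lp' p' -> on_line b' a' lq' q' ->
     Rabs (lp - lp') <= sqrt 2 * side s + 4 * sqrt (side s) /\
     Rabs (lq - lq') <= sqrt 2 * side s + 4 * sqrt (side s))
  /\
  (* consequence: L = O(sqrt u) uniformly in s and good box pairs *)
  (exists C : R, forall (s i1 j1 i2 j2 : nat),
     good_pair s i1 j1 i2 j2 ->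
     forall (b a bc ac : pt) (mu1 mu2 : R),
       traverses s i1 j1 i2 j2 b a ->
       line_L bc ac ->
       on_line bc ac mu1 (center s i1 j1) ->
       on_line bc ac mu2 (center s i2 j2) ->
       (forall (p : pt) (lam : R), in_box s i1 j1 p -> on_line b a lam p ->
          Rabs (lam - mu1) <= C * sqrt (side s)) /\
       (forall (p : pt) (lam : R), in_box s i2 j2 p -> on_line b a lam p ->
          Rabs (lam - mu2) <= C * sqrt (side s))).
Proof.
  split.
  - intros s i1 j1 i2 j2 p q p' q' b a b' a' lp lq lp' lq'
      hg hp hq hp' hq' pq pq' hl ep eq hl' ep' eq'.
    pose proof (good_pair_dir_sums_close s i1 j1 i2 j2 p q p' q' b a b' a' lp lq lp' lq'
                  hg hp hq hp' hq' pq pq' hl ep eq hl' ep' eq') as close.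
    destruct hg as (box1 & box2 & _).
    split.
    + pose proof (param_diff_le b a b' a' lp lp' p p' _ hl hl' ep ep'
                    (box_sum_bounds s i1 j1 p' box1 hp') (in_box_sum_diff s i1 j1 p p' hp hp')).
      lra.
    + pose proof (param_diff_le b a b' a' lq lq' q q' _ hl hl' eq eq'
                    (box_sum_bounds s i2 j2 q' box2 hq') (in_box_sum_diff s i2 j2 q q' hq hq')).
      lra.
  - exists 5. intros s i1 j1 i2 j2 hg b a bc ac mu1 mu2 htr hlc e1 e2.
    pose proof (center_dir_sum_close s i1 j1 i2 j2 b a bc ac mu1 mu2 hg htr hlc e1 e2) as close.
    pose proof (side_le_sqrt_side s).
    destruct hg as (box1 & box2 & _), htr as (hl & _).
    split; intros p lam hp ep.
    + pose proof (param_diff_le b a bc ac lam mu1 p _ _ hl hlc ep e1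
                    (box_sum_bounds s i1 j1 _ box1 (center_in_box s i1 j1))
                    (in_box_sum_near_center s i1 j1 p hp)).
      lra.
    + pose proof (param_diff_le b a bc ac lam mu2 p _ _ hl hlc ep e2
                    (box_sum_bounds s i2 j2 _ box2 (center_in_box s i2 j2))
                    (in_box_sum_near_center s i2 j2 p hp)).
      lra.
Qed.
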